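(* Let $a>0$, $t_f>0$, $0<\lambda<1$, and real $u_L \neq u_R$. For $h>0$ let $\nu_h = \frac{a h (1-\lambda)}{2}$ and $$u_h(x) = \frac{u_L+u_R}{2} + \frac{u_R-u_L}{2}\operatorname{erf}\!\left(\frac{x-a t_f}{\sqrt{4\nu_h t_f}}\right), \qquad x\in\mathbb{R},$$ where $\operatorname{erf}(\zeta) = \frac{2}{\sqrt{\pi}}\int_0^\zeta e^{-s^2}\,ds$. Then there is a constant $C>0$ depending only on $a,t_f,\lambda,u_L,u_R$ (not on $h$) such that for all $h,h'>0$, $$\|u_h - u_{h'}\|_{L_1(\mathbb{R})} = C\,\left|\sqrt{h}-\sqrt{h'}\right|.$$ Consequently, for any pairwise distinct $h_1,h_2,h_3>0$ and any ordering $(i,j,k)$ of $\{1,2,3\}$, $\sigma = 1/2$ solves $$\frac{\|u_{h_i}-u_{h_j}\|_{L_1}}{\|u_{h_j}-u_{h_k}\|_{L_1}} = \frac{|h_i^\sigma - h_j^\sigma|}{|h_j^\sigma - h_k^\sigma|};$$ i.e. all three variants $\mathcal{R}(u_{h_1},u_{h_2},u_{h_3})$, $\mathcal{R}(u_{h_1},u_{h_3},u_{h_2})$, $\mathcal{R}(u_{h_2},u_{h_1},u_{h_3})$ of the Richardson convergence-rate estimate yield the rate $1/2$.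
   Context: Setting: $u_h$ is the solution at time $t_f$ of the truncated modified equation $U_t + aU_x - \nu_h U_{xx} = 0$ of the first-order upwind scheme $u_i^{n+1} = u_i^n - \lambda(u_i^n - u_{i-1}^n)$ (CFL number $\lambda = a\Delta t/h$, same $\lambda$ at all resolutions) for linear advection $u_t + a u_x=0$ with jump initial data $u=u_L$ for $x<0$, $u=u_R$ for $x\ge0$; it is taken as the model of the numerical solution at grid spacing $h$. Richardson convergence-rate estimate: $\mathcal{R}(v_1,v_2,v_3)$, for approximations $v_m$ at spacings $g_m$, denotes the solution $\sigma$ of $\frac{\|v_1-v_2\|}{\|v_2-v_3\|} = \frac{|g_1^\sigma-g_2^\sigma|}{|g_2^\sigma-g_3^\sigma|}$ with $\|\cdot\|$ the $L_1$ norm. *)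

From Stdlib Require Import Reals Lra.
From Coquelicot Require Import Coquelicot.
Open Scope R_scope.

Definition erf (z : R) : R :=
  2 / sqrt PI * RInt (fun s => exp (- (s ^ 2))) 0 z.

(* Numerical viscosity of the first-order upwind scheme *)
Definition nu_h (a lam h : R) : R := a * h * (1 - lam) / 2.

(* Solution at time tf of the truncated modified equation with jump data *)
Definition u_h (a tf lam uL uR h : R) (x : R) : R :=
  (uL + uR) / 2 + (uR - uL) / 2 * erf ((x - a * tf) / sqrt (4 * nu_h a lam h * tf)).

Definition L1dist (f g : R -> R) : R :=
  RInt_gen (fun x => Rabs (f x - g x)) (Rbar_locally m_infty) (Rbar_locally p_infty).

(* With y = x - a tf and sigma_h = sqrt (2 a (1 - lam) tf) * sqrt h, the difference
   u_h - u_h' is (uR - uL)/2 * (erf (y / sigma_h) - erf (y / sigma_h')).  Since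
   F z = z erf z + exp (- z^2) / sqrt PI is a primitive of erf, the gap
   erf (y / s) - erf (y / s') has the primitive s F (y / s) - s' F (y / s'), in which the
   linear growth of the two terms cancels, so that it decays like a Gaussian at both ends;
   the gap has the sign of y, so its L1 norm is twice the value of that primitive at y = 0
   up to sign, i.e. 2 |s - s'| / sqrt PI. *)

From Stdlib Require Import Reals Lra.
From Coquelicot Require Import Coquelicot.
Open Scope R_scope.

Lemma is_RInt_gen_of_is_derive (F f : R -> R) (Fa Fb : (R -> Prop) -> Prop) la lb :
  Filter Fa -> Filter Fb ->
  (forall x, is_derive F x (f x)) -> (forall x, continuous f x) ->
  filterlim F Fa (locally la) -> filterlim F Fb (locally lb) ->
  is_RInt_gen f Fa Fb (lb - la).
Proof.
  intros HFa HFb HF Hf Ha Hb.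
  assert (HD : forall x, Derive F x = f x) by (intros; apply is_derive_unique, HF).
  apply (is_RInt_gen_ext (Derive F)); [apply filter_forall; intros; apply HD |].
  apply is_RInt_gen_Derive; try assumption; apply filter_forall; intros ab x _.
  - eexists; apply HF.
  - apply (continuous_ext f); [intros; symmetry; apply HD | apply Hf].
Qed.

Lemma filterlim_at_point (f : R -> R) c : filterlim f (at_point c) (locally (f c)).
Proof. intros P HP. exact (locally_singleton _ _ HP). Qed.

Lemma Rbar_locally_infty_far c N :
  Rbar_locally p_infty (fun x => N < Rabs (x - c)) /\ Rbar_locally m_infty (fun x => N < Rabs (x - c)).
Proof.
  pose proof (Rle_abs N). pose proof (Rle_abs c). pose proof (Rle_abs (- c)). rewrite Rabs_Ropp in *.
  split; [exists (Rabs N + Rabs c) | exists (- (Rabs N + Rabs c))]; intros x Hx.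
  - pose proof (Rle_abs (x - c)). lra.
  - pose proof (Rle_abs (- (x - c))). rewrite Rabs_Ropp in *. lra.
Qed.

Lemma is_lim_affine_mul_exp_opp A B :
  is_lim (fun w => (A * w + B) * exp (- w)) p_infty 0.
Proof.
  assert (Hopp : is_lim Ropp p_infty m_infty) by exact (is_lim_opp _ _ _ (is_lim_id p_infty)).
  assert (Hnot : Rbar_locally' p_infty (fun w => Finite (- w) <> m_infty)) by (exists 0; easy).
  assert (H1 : is_lim (fun w => - w * exp (- w)) p_infty 0)
    by exact (is_lim_comp _ _ _ _ _ is_lim_mul_exp_m Hopp Hnot).
  assert (H2 : is_lim (fun w => exp (- w)) p_infty 0)
    by exact (is_lim_comp _ _ _ _ _ is_lim_exp_m Hopp Hnot).
  apply (is_lim_ext (fun w => - A * (- w * exp (- w)) + B * exp (- w))); [intros; ring |].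
  replace (Finite 0) with (Finite (- A * 0 + B * 0)) by (f_equal; ring).
  apply is_lim_plus'; apply (is_lim_scal_l _ _ _ (Finite 0)); assumption.
Qed.

Definition gauss (t : R) : R := exp (- (t ^ 2)).

Lemma gauss_pos t : 0 < gauss t.
Proof. apply exp_pos. Qed.

Lemma gauss_le x y : y ^ 2 <= x ^ 2 -> gauss x <= gauss y.
Proof.
  intros Hxy. unfold gauss. destruct (Req_dec (x ^ 2) (y ^ 2)) as [E | E].
  - rewrite E; lra.
  - apply Rlt_le, exp_increasing; lra.
Qed.

Lemma is_derive_gauss t : is_derive gauss t (- (2 * t) * gauss t).
Proof. unfold gauss. auto_derive; [easy | simpl; ring]. Qed.

Lemma continuous_gauss t : continuous gauss t.
Proof. apply (ex_derive_continuous (V := R_NormedModule)). eexists; apply is_derive_gauss. Qed.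

Lemma ex_RInt_gauss a b : ex_RInt gauss a b.
Proof. apply (ex_RInt_continuous (V := R_CompleteNormedModule)); intros; apply continuous_gauss. Qed.

Lemma sqrt_PI_pos : 0 < sqrt PI.
Proof. apply sqrt_lt_R0, PI_RGT_0. Qed.

Lemma erf_sub p q : erf p - erf q = 2 / sqrt PI * RInt gauss q p.
Proof.
  unfold erf; fold gauss.
  rewrite <- (RInt_Chasles gauss 0 q p) by apply ex_RInt_gauss.
  change (plus ?u ?v) with (u + v). ring.
Qed.

Lemma is_derive_erf z : is_derive erf z (2 / sqrt PI * gauss z).
Proof.
  unfold erf; fold gauss. apply is_derive_scal.
  apply (is_derive_RInt gauss (RInt gauss 0) 0 z).
  - apply filter_forall; intros b. apply (RInt_correct (V := R_CompleteNormedModule)), ex_RInt_gauss.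
  - apply continuous_gauss.
Qed.

Lemma erf_le p q : q <= p -> erf q <= erf p.
Proof.
  intros Hqp. cut (0 <= erf p - erf q); [lra |]. rewrite erf_sub.
  pose proof sqrt_PI_pos. apply Rmult_le_pos.
  - apply Rlt_le, Rdiv_lt_0_compat; lra.
  - apply RInt_ge_0; [easy | apply ex_RInt_gauss |]. intros; apply Rlt_le, gauss_pos.
Qed.

(* Mean-value bound: between [q] and [p] the Gaussian is largest at the end nearer to 0. *)
Lemma Rabs_erf_sub_le p q : 0 <= q <= p \/ p <= q <= 0 ->
  Rabs (erf p - erf q) <= 2 / sqrt PI * Rabs (p - q) * gauss q.
Proof.
  assert (Hk : 0 < 2 / sqrt PI) by (apply Rdiv_lt_0_compat; [lra | apply sqrt_PI_pos]).
  assert (Hint : forall u v, u <= v -> (forall x, u <= x <= v -> q ^ 2 <= x ^ 2) ->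
            Rabs (RInt gauss u v) <= (v - u) * gauss q).
  { intros u v Huv Hx. apply (norm_RInt_le_const (V := R_NormedModule) gauss); [easy | |].
    - intros x Hx'. change (Rabs (gauss x) <= gauss q).
      rewrite Rabs_pos_eq by apply Rlt_le, gauss_pos. apply gauss_le, Hx, Hx'.
    - apply (RInt_correct (V := R_CompleteNormedModule)), ex_RInt_gauss. }
  intros [H | H].
  - rewrite erf_sub, Rabs_mult, (Rabs_pos_eq (2 / sqrt PI)), (Rabs_pos_eq (p - q)) by lra.
    rewrite Rmult_assoc. apply Rmult_le_compat_l; [lra |]. apply Hint; [lra |]. intros; nra.
  - replace (erf p - erf q) with (- (erf q - erf p)) by ring.
    rewrite Rabs_Ropp, erf_sub, Rabs_mult, (Rabs_pos_eq (2 / sqrt PI)), (Rabs_left1 (p - q)) by lra.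
    rewrite Rmult_assoc. apply Rmult_le_compat_l; [lra |].
    replace (- (p - q)) with (q - p) by ring. apply Hint; [lra |]. intros; nra.
Qed.

Definition erf_prim (z : R) : R := z * erf z + gauss z / sqrt PI.

Lemma is_derive_erf_prim z : is_derive erf_prim z (erf z).
Proof.
  pose proof sqrt_PI_pos.
  evar (l : R). replace (erf z) with l; [unfold erf_prim |].
  - apply (is_derive_plus (V := R_NormedModule)).
    + apply (is_derive_mult (K := R_AbsRing)); [apply (is_derive_id (K := R_AbsRing)) | apply is_derive_erf |].
      intros; apply Rmult_comm.
    + apply (is_derive_ext (fun t => / sqrt PI * gauss t)); [intros; apply Rmult_comm |].
      apply is_derive_scal, is_derive_gauss.
  - unfold l, plus, mult, one; simpl. field; lra.
Qed.

Lemma is_derive_erf_prim_scaled s c x : 0 < s ->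
  is_derive (fun y => s * erf_prim ((y - c) / s)) x (erf ((x - c) / s)).
Proof.
  intros Hs. evar (l : R). replace (erf ((x - c) / s)) with l.
  - apply is_derive_scal, (is_derive_comp (K := R_AbsRing) (V := R_NormedModule) erf_prim).
    + apply is_derive_erf_prim.
    + auto_derive; easy.
  - unfold l, scal; simpl. unfold mult; simpl. field; lra.
Qed.

Definition erf_gap_prim (s s' c x : R) : R :=
  s * erf_prim ((x - c) / s) - s' * erf_prim ((x - c) / s').

Section ErfGap.

Variables s s' c : R.
Hypothesis s_pos : 0 < s.
Hypothesis s_le : s <= s'.

Let s'_pos : 0 < s'. Proof. lra. Qed.

Lemma is_derive_erf_gap_prim x :
  is_derive (erf_gap_prim s s' c) x (erf ((x - c) / s) - erf ((x - c) / s')).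
Proof.
  apply (is_derive_minus (V := R_NormedModule)); apply is_derive_erf_prim_scaled; lra.
Qed.

Lemma continuous_erf_gap x :
  continuous (fun x => erf ((x - c) / s) - erf ((x - c) / s')) x.
Proof.
  apply (ex_derive_continuous (V := R_NormedModule)).
  assert (Hd : forall r, 0 < r -> ex_derive (fun x => erf ((x - c) / r)) x).
  { intros r Hr. eexists.
    apply (is_derive_comp (K := R_AbsRing) (V := R_NormedModule) erf); [apply is_derive_erf |].
    auto_derive; easy. }
  apply (ex_derive_minus (V := R_NormedModule)); apply Hd; lra.
Qed.

Lemma erf_gap_sign x : (c <= x -> erf ((x - c) / s') <= erf ((x - c) / s))
                    /\ (x <= c -> erf ((x - c) / s) <= erf ((x - c) / s')).
Proof.
  assert (Hinv : / s' <= / s) by (apply Rinv_le_contravar; lra).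
  split; intros Hx; apply erf_le; unfold Rdiv.
  - apply Rmult_le_compat_l; lra.
  - apply Rmult_le_compat_neg_l; lra.
Qed.

Lemma erf_gap_prim_center : erf_gap_prim s s' c c = (s - s') / sqrt PI.
Proof.
  unfold erf_gap_prim, erf_prim, gauss. replace ((c - c) / s) with 0 by (field; lra).
  replace ((c - c) / s') with 0 by (field; lra).
  replace (- (0 ^ 2)) with 0 by ring. rewrite exp_0. field. apply Rgt_not_eq, sqrt_PI_pos.
Qed.

Lemma Rabs_erf_gap_prim_le x :
  let w := ((x - c) / s') ^ 2 in
  Rabs (erf_gap_prim s s' c x)
    <= (2 / sqrt PI * (/ s - / s') * s' ^ 2 * w + (s + s') / sqrt PI) * exp (- w).
Proof.
  intros w. pose proof sqrt_PI_pos as HPI.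
  set (y := x - c) in *. set (p := y / s). set (q := y / s').
  assert (Hinv : / s' <= / s) by (apply Rinv_le_contravar; lra).
  assert (Hgq : gauss q = exp (- w)) by reflexivity.
  assert (Hpq : p - q = y * (/ s - / s')) by (unfold p, q; field; lra).
  assert (Hw : y ^ 2 = s' ^ 2 * w). { unfold w. field; lra. }
  assert (Hgap : erf_gap_prim s s' c x
                 = y * (erf p - erf q) + (s * gauss p - s' * gauss q) / sqrt PI).
  { unfold erf_gap_prim, erf_prim, p, q; fold y. field; split; lra. }
  assert (Hgauss : gauss p <= gauss q).
  { apply gauss_le. unfold p, q. unfold Rdiv.
    rewrite !Rpow_mult_distr. apply Rmult_le_compat_l; [apply pow2_ge_0 |].
    apply pow_incr; split; [apply Rlt_le, Rinv_0_lt_compat |]; lra. }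
  assert (Herf : Rabs (erf p - erf q) <= 2 / sqrt PI * (Rabs y * (/ s - / s')) * gauss q).
  { rewrite <- (Rabs_pos_eq (/ s - / s')) by lra. rewrite <- Rabs_mult, <- Hpq.
    apply Rabs_erf_sub_le. unfold p, q, Rdiv. destruct (Rle_lt_dec 0 y).
    - left. split; [apply Rmult_le_pos; [lra | apply Rlt_le, Rinv_0_lt_compat; lra] |].
      apply Rmult_le_compat_l; lra.
    - right. split; [apply Rmult_le_compat_neg_l; lra |].
      apply Rlt_le, Rmult_neg_pos; [lra | apply Rinv_0_lt_compat; lra]. }
  assert (H1 : Rabs (y * (erf p - erf q)) <= 2 / sqrt PI * (/ s - / s') * s' ^ 2 * w * gauss q).
  { rewrite Rabs_mult. eapply Rle_trans.
    - apply Rmult_le_compat_l; [apply Rabs_pos | exact Herf].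
    - right. replace w with (Rabs y ^ 2 / s' ^ 2) by (rewrite pow2_abs, Hw; field; lra).
      field; lra. }
  assert (H2 : Rabs ((s * gauss p - s' * gauss q) / sqrt PI) <= (s + s') / sqrt PI * gauss q).
  { pose proof (gauss_pos p). unfold Rdiv. rewrite Rabs_mult, Rabs_inv, (Rabs_pos_eq (sqrt PI)) by lra.
    assert (Rabs (s * gauss p - s' * gauss q) <= (s + s') * gauss q) by (apply Rabs_le; split; nra).
    assert (0 < / sqrt PI) by (apply Rinv_0_lt_compat; lra). nra. }
  rewrite Hgap, <- Hgq. eapply Rle_trans; [apply Rabs_triang | lra].
Qed.

Lemma filterlim_erf_gap_prim (F : (R -> Prop) -> Prop) : Filter F ->
  (forall N, F (fun x => N < Rabs (x - c))) -> filterlim (erf_gap_prim s s' c) F (locally 0).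
Proof.
  intros HF Hfar.
  set (A := 2 / sqrt PI * (/ s - / s') * s' ^ 2). set (B := (s + s') / sqrt PI).
  assert (Hw : filterlim (fun x => ((x - c) / s') ^ 2) F (Rbar_locally p_infty)).
  { intros P [M HM]. apply (filter_imp (F := F) (fun x => s' * (Rabs M + 1) < Rabs (x - c))).
    2: apply Hfar. intros x Hx. apply HM.
    assert (Hq : Rabs M + 1 < Rabs ((x - c) / s')).
    { unfold Rdiv. rewrite Rabs_mult, Rabs_inv, (Rabs_pos_eq s') by lra.
      apply (Rmult_lt_reg_l s'); [lra |]. field_simplify; lra. }
    rewrite <- pow2_abs. pose proof (Rabs_pos M). pose proof (Rle_abs M). nra. }
  assert (Hbound := filterlim_comp _ _ _ _ _ _ _ _ Hw (is_lim_affine_mul_exp_opp A B)).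
  apply (filterlim_locally (erf_gap_prim s s' c)). intros eps.
  apply (filter_imp (fun x => Rabs ((A * ((x - c) / s') ^ 2 + B) * exp (- ((x - c) / s') ^ 2) - 0) < eps)).
  - intros x Hx. change (Rabs (erf_gap_prim s s' c x - 0) < eps). rewrite Rminus_0_r in *.
    eapply Rle_lt_trans; [apply Rabs_erf_gap_prim_le | eapply Rle_lt_trans; [apply Rle_abs | exact Hx]].
  - exact (proj1 (filterlim_locally _ _) Hbound eps).
Qed.

Lemma is_RInt_gen_erf_gap :
  is_RInt_gen (fun x => Rabs (erf ((x - c) / s) - erf ((x - c) / s')))
    (Rbar_locally m_infty) (Rbar_locally p_infty) (2 * (s' - s) / sqrt PI).
Proof.
  set (f := fun x => erf ((x - c) / s) - erf ((x - c) / s')).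
  set (G := erf_gap_prim s s' c).
  assert (HRInt : forall Fa Fb la lb, Filter Fa -> Filter Fb ->
            filterlim G Fa (locally la) -> filterlim G Fb (locally lb) -> is_RInt_gen f Fa Fb (lb - la)).
  { intros Fa Fb la lb HFa HFb. apply is_RInt_gen_of_is_derive; try assumption.
    - apply is_derive_erf_gap_prim.
    - apply continuous_erf_gap. }
  assert (Hright : is_RInt_gen f (at_point c) (Rbar_locally p_infty) (0 - G c)).
  { apply HRInt; try apply filterlim_at_point; try typeclasses eauto.
    apply filterlim_erf_gap_prim; [typeclasses eauto |]. intros N; apply Rbar_locally_infty_far. }
  assert (Hleft : is_RInt_gen f (Rbar_locally m_infty) (at_point c) (G c - 0)).
  { apply HRInt; try apply filterlim_at_point; try typeclasses eauto.
    apply filterlim_erf_gap_prim; [typeclasses eauto |]. intros N; apply Rbar_locally_infty_far. }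
  replace (2 * (s' - s) / sqrt PI) with (plus (opp (G c - 0)) (0 - G c))
    by (unfold G; rewrite erf_gap_prim_center; unfold plus, opp; simpl; field; apply Rgt_not_eq, sqrt_PI_pos).
  apply (is_RInt_gen_Chasles (V := R_NormedModule) _ c).
  - apply (is_RInt_gen_ext (fun x => opp (f x))); [| exact (is_RInt_gen_opp _ _ Hleft)].
    apply (Filter_prod _ _ _ (fun a => a < c) (fun b => b = c)); [exists c; easy | easy |].
    intros a b Ha Hb x Hx. simpl in Hx. rewrite Hb, Rmin_left, Rmax_right in Hx by lra.
    unfold f, opp; simpl. rewrite Rabs_left1; [easy |]. pose proof (proj2 (erf_gap_sign x)). lra.
  - apply (is_RInt_gen_ext f); [| exact Hright].
    apply (Filter_prod _ _ _ (fun a => a = c) (fun b => c < b)); [easy | exists c; easy |].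
    intros a b Ha Hb x Hx. simpl in Hx. rewrite Ha, Rmin_left, Rmax_right in Hx by lra.
    unfold f. rewrite Rabs_pos_eq; [easy |]. pose proof (proj1 (erf_gap_sign x)). lra.
Qed.

End ErfGap.

Lemma is_RInt_gen_Rabs_erf_sub s s' c : 0 < s -> 0 < s' ->
  is_RInt_gen (fun x => Rabs (erf ((x - c) / s) - erf ((x - c) / s')))
    (Rbar_locally m_infty) (Rbar_locally p_infty) (2 * Rabs (s - s') / sqrt PI).
Proof.
  intros Hs Hs'. destruct (Rle_lt_dec s s') as [Hle | Hlt].
  - rewrite Rabs_left1 by lra. replace (- (s - s')) with (s' - s) by ring.
    apply is_RInt_gen_erf_gap; lra.
  - rewrite Rabs_pos_eq by lra.
    apply (is_RInt_gen_ext (fun x => Rabs (erf ((x - c) / s') - erf ((x - c) / s)))).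
    + apply filter_forall; intros ab x _. apply Rabs_minus_sym.
    + apply is_RInt_gen_erf_gap; lra.
Qed.

Lemma sqrt_4_nu_h_tf a tf lam h : 0 < a -> 0 < tf -> lam < 1 -> 0 < h ->
  sqrt (4 * nu_h a lam h * tf) = sqrt (2 * a * (1 - lam) * tf) * sqrt h.
Proof.
  intros Ha Htf Hlam Hh. rewrite <- sqrt_mult by (try apply Rlt_le, Rmult_lt_0_compat; nra).
  f_equal. unfold nu_h; field.
Qed.

Definition l1_rate_const (a tf lam uL uR : R) : R :=
  Rabs (uR - uL) * sqrt (2 * a * (1 - lam) * tf) / sqrt PI.

Lemma l1_rate_const_pos a tf lam uL uR : 0 < a -> 0 < tf -> lam < 1 -> uL <> uR ->
  0 < l1_rate_const a tf lam uL uR.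
Proof.
  intros Ha Htf Hlam HuLR. unfold l1_rate_const.
  apply Rdiv_lt_0_compat; [apply Rmult_lt_0_compat | apply sqrt_PI_pos].
  - apply Rabs_pos_lt; lra.
  - apply sqrt_lt_R0. repeat apply Rmult_lt_0_compat; lra.
Qed.

Lemma is_RInt_gen_Rabs_u_h_sub a tf lam uL uR h h' :
  0 < a -> 0 < tf -> lam < 1 -> 0 < h -> 0 < h' ->
  is_RInt_gen (fun x => Rabs (u_h a tf lam uL uR h x - u_h a tf lam uL uR h' x))
    (Rbar_locally m_infty) (Rbar_locally p_infty)
    (l1_rate_const a tf lam uL uR * Rabs (sqrt h - sqrt h')).
Proof.
  intros Ha Htf Hlam Hh Hh'.
  set (k := sqrt (2 * a * (1 - lam) * tf)).
  assert (Hk : 0 < k) by (apply sqrt_lt_R0; repeat apply Rmult_lt_0_compat; lra).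
  pose proof (sqrt_lt_R0 h Hh). pose proof (sqrt_lt_R0 h' Hh').
  assert (Herf := is_RInt_gen_scal (V := R_NormedModule)
    (Fa := Rbar_locally m_infty) (Fb := Rbar_locally p_infty) _ (Rabs ((uR - uL) / 2)) _
    (is_RInt_gen_Rabs_erf_sub (k * sqrt h) (k * sqrt h') (a * tf)
       ltac:(apply Rmult_lt_0_compat; lra) ltac:(apply Rmult_lt_0_compat; lra))).
  replace (l1_rate_const a tf lam uL uR * Rabs (sqrt h - sqrt h'))
    with (scal (Rabs ((uR - uL) / 2)) (2 * Rabs (k * sqrt h - k * sqrt h') / sqrt PI)).
  - eapply is_RInt_gen_ext; [| exact Herf].
    apply filter_forall; intros ab x _. unfold u_h. rewrite !sqrt_4_nu_h_tf by assumption.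
    change scal with Rmult. rewrite <- Rabs_mult. f_equal. fold k. ring.
  - unfold l1_rate_const, scal; simpl; unfold mult; simpl.
    rewrite <- Rmult_minus_distr_l, Rabs_mult, (Rabs_pos_eq k) by lra. fold k.
    unfold Rdiv. rewrite Rabs_mult, (Rabs_pos_eq (/ 2)) by lra. field.
    apply Rgt_not_eq, sqrt_PI_pos.
Qed.

Lemma L1dist_u_h a tf lam uL uR h h' :
  0 < a -> 0 < tf -> lam < 1 -> 0 < h -> 0 < h' ->
  L1dist (u_h a tf lam uL uR h) (u_h a tf lam uL uR h')
  = l1_rate_const a tf lam uL uR * Rabs (sqrt h - sqrt h').
Proof. intros. apply is_RInt_gen_unique, is_RInt_gen_Rabs_u_h_sub; assumption. Qed.

Theorem mainTheorem2 (a tf lam uL uR : R) :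
  0 < a -> 0 < tf -> 0 < lam < 1 -> uL <> uR ->
  exists C : R, 0 < C /\
    (forall h h' : R, 0 < h -> 0 < h' ->
       is_RInt_gen
         (fun x => Rabs (u_h a tf lam uL uR h x - u_h a tf lam uL uR h' x))
         (Rbar_locally m_infty) (Rbar_locally p_infty)
         (C * Rabs (sqrt h - sqrt h'))) /\
    (forall hi hj hk : R, 0 < hi -> 0 < hj -> 0 < hk ->
       hi <> hj -> hj <> hk -> hi <> hk ->
       L1dist (u_h a tf lam uL uR hi) (u_h a tf lam uL uR hj)
         / L1dist (u_h a tf lam uL uR hj) (u_h a tf lam uL uR hk)
       = Rabs (Rpower hi (1/2) - Rpower hj (1/2))
         / Rabs (Rpower hj (1/2) - Rpower hk (1/2))).
Proof.
  intros Ha Htf [_ Hlam] HuLR.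
  pose proof (l1_rate_const_pos a tf lam uL uR Ha Htf Hlam HuLR) as HC.
  exists (l1_rate_const a tf lam uL uR). split; [exact HC | split].
  - intros h h' Hh Hh'. apply is_RInt_gen_Rabs_u_h_sub; assumption.
  - intros hi hj hk Hi Hj Hk _ Hjk _.
    rewrite !L1dist_u_h by assumption.
    replace (1 / 2) with (/ 2) by field. rewrite !Rpower_sqrt by assumption.
    assert (Rabs (sqrt hj - sqrt hk) <> 0).
    { apply Rabs_no_R0. intros E. apply Hjk, sqrt_inj; lra. }
    field. split; lra.
Qed.
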